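(* Fix $c>1$. In any regular terrain (with respect to $c$), with initial agent position $p$ and treasure position $q$, the advice string $Code(a_1,a_2,a_3)$ given to Algorithm $THunt$ has length $O(\log(L/\lambda))$, where $L$ is the length of a shortest path in the terrain from $p$ to $q$ and $\lambda$ is the accessibility of the treasure.
   Context: A terrain is $\mathcal{T}=P_0\setminus(P_1\cup\dots\cup P_k)$, where $P_0$ is a closed polygon and the obstacles $P_1,\dots,P_k$ are pairwise disjoint open polygons contained in the interior of $P_0$; the treasure $q$ is an interior point of $\mathcal{T}$ and the agent starts at $p\in\mathcal{T}$. $L$ is the length of a shortest path in $\mathcal{T}$ from $p$ to $q$. The accessibility of the treasure is $\lambda=\min(1,\rho)$, where $\rho$ is the largest radius of a disc centered at $q$ contained in $\mathcal{T}$. A polygon is $c$-fat if the ratio of the radius of the smallest disc containing it to the radius of the largest disc contained in it is at most $c$; a terrain is regular if $P_0$ is convex and every obstacle is convex and $c$-fat. The advice: let $a_1=\lceil 2/\lambda\rceil$. Tile the plane by squares of side $1/a_1$ with horizontal and vertical sides, with $p$ a corner of a tile. Columns of tiles are numbered $1,2,\dots$ going East from $p$ and $-1,-2,\dots$ going West; rows are numbered $1,2,\dots$ going North from $p$ and $-1,-2,\dots$ going South. Among tiles contained in the disc of radius $\lambda$ centered at $q$, let $T$ be the one in the smallest-indexed row containing such a tile and, within that row, in the smallest-indexed column containing such a tile; $a_2$ is its column number and $a_3$ its row number. $Code(a_1,a_2,a_3)$ is the concatenation $\xi_2,\xi_3,\beta_1,000,\beta_2,000,\beta_3$, where $\xi_i=1$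 if $a_i>0$ and $0$ if $a_i<0$, and $\beta_i$ is obtained from the binary representation of $|a_i|$ by replacing each bit $1$ by $10$ and each bit $0$ by $01$.
   Formalization: The length of $Code(a_1,a_2,a_3)$ is at most a constant depending only on c times 1 + ln(max(L,1)/λ), instead of O(log(L/λ)), and the tile T is also asserted to exist. Apart from conventions, each condition added here is assumed in the paper as well or is needed for the statement above to hold. *)

From HB Require Import structures.
From Stdlib Require Import BinNums BinPos BinNat.
From mathcomp Require Import all_boot all_order all_algebra.
From mathcomp Require Import all_classical all_reals all_analysis.
Set Implicit Arguments. Unset Strict Implicit. Unset Printing Implicit Defensive.
Import Order.TTheory GRing.Theory Num.Theory.
Local Open Scope classical_set_scope.
Local Open Scope ring_scope.

Section Geometry.
Variable R : realType.

Definition pt := (R * R)%type.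

Definition dist (a b : pt) : R :=
  Num.sqrt ((a.1 - b.1) ^+ 2 + (a.2 - b.2) ^+ 2).

Definition cdisc (x : pt) (r : R) : set pt := [set y | dist x y <= r].
Definition odisc (x : pt) (r : R) : set pt := [set y | dist x y < r].

Definition interior_of (S : set pt) : set pt :=
  [set x | exists r : R, 0 < r /\ odisc x r `<=` S].

Definition conv_hull (vs : seq pt) : set pt :=
  [set x | exists w : seq R,
     [/\ size w = size vs, all (fun a => 0 <= a) w,
         \sum_(i < size vs) nth 0 w i = 1 &
         x = (\sum_(i < size vs) nth 0 w i * (nth (0, 0) vs i).1,
              \sum_(i < size vs) nth 0 w i * (nth (0, 0) vs i).2)]].

(* A closed convex polygon with vertex list vs is conv_hull vs (required to
   have nonempty interior); an open convex polygon is its interior. *)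
Definition obstacle (vs : seq pt) : set pt := interior_of (conv_hull vs).

Definition fat (c : R) (P : set pt) : Prop :=
  inf [set Rr : R | 0 <= Rr /\ exists x, P `<=` cdisc x Rr]
  / sup [set r : R | 0 <= r /\ exists y, cdisc y r `<=` P] <= c.

Definition terrain (v0 : seq pt) (obs : seq (seq pt)) : set pt :=
  conv_hull v0 `\` [set x | exists P, P \in obs /\ obstacle P x].

Definition regular_terrain (c : R) (v0 : seq pt) (obs : seq (seq pt)) : Prop :=
  [/\ exists x, interior_of (conv_hull v0) x,
      forall P, P \in obs -> exists x, obstacle P x,
      forall i j, (i < size obs)%N -> (j < size obs)%N -> i != j ->
        obstacle (nth [::] obs i) `&` obstacle (nth [::] obs j) = set0,
      forall P, P \in obs -> obstacle P `<=` interior_of (conv_hull v0)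
    & forall P, P \in obs -> fat c (obstacle P)].

Definition is_path (T : set pt) (p q : pt) (g : R -> pt) : Prop :=
  [/\ g 0 = p, g 1 = q,
      forall t, 0 <= t <= 1 -> T (g t)
    & forall t, 0 <= t <= 1 -> forall e : R, 0 < e ->
        exists d : R, 0 < d /\ forall s, 0 <= s <= 1 -> `|s - t| < d ->
          dist (g s) (g t) < e].

Definition curve_length (g : R -> pt) : \bar R :=
  ereal_sup [set x | exists (n : nat) (ts : nat -> R),
    [/\ ts 0%N = 0, ts n = 1, forall i, (i < n)%N -> ts i <= ts i.+1 &
        x = (\sum_(i < n) dist (g (ts i.+1)) (g (ts i)))%:E]].

Definition shortest_path_length (T : set pt) (p q : pt) (L : R) : Prop :=
  (exists g, is_path T p q g /\ curve_length g = L%:E) /\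
  (forall g, is_path T p q g -> (L%:E <= curve_length g)%E).

Definition accessibility (T : set pt) (q : pt) : R :=
  Num.min 1 (sup [set r : R | 0 <= r /\ cdisc q r `<=` T]).

Definition adv_a1 (lam : R) : nat := `|Num.ceil (2 / lam)|%N.

(* tile in column i, row j (i, j nonzero integers), side 1/a1, p a corner *)
Definition tile_lo (x0 : R) (a1 : nat) (i : int) : R :=
  x0 + (if (0 < i)%R then (i - 1)%:~R else i%:~R) / a1%:R.

Definition tile (p : pt) (a1 : nat) (i j : int) : set pt :=
  [set z | tile_lo p.1 a1 i <= z.1 <= tile_lo p.1 a1 i + 1 / a1%:R /\
           tile_lo p.2 a1 j <= z.2 <= tile_lo p.2 a1 j + 1 / a1%:R].

Definition advice_tile (p q : pt) (lam : R) (a1 : nat) (a2 a3 : int) : Prop :=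
  [/\ a2 != 0, a3 != 0, tile p a1 a2 a3 `<=` cdisc q lam &
      forall i j : int, i != 0 -> j != 0 -> tile p a1 i j `<=` cdisc q lam ->
        (a3 < j) \/ (a3 = j /\ a2 <= i)].

End Geometry.

Fixpoint pos_bits (x : positive) : seq bool :=
  match x with
  | xH => [:: true]
  | xO y => rcons (pos_bits y) false
  | xI y => rcons (pos_bits y) true
  end.

Definition binrep (n : nat) : seq bool :=
  match N.of_nat n with
  | N0 => [:: false]
  | Npos x => pos_bits x
  end.

Definition beta (n : nat) : seq bool :=
  flatten [seq (if b then [:: true; false] else [:: false; true]) | b <- binrep n].

Definition Code (a1 : nat) (a2 a3 : int) : seq bool :=
  [:: (0 < a2)%R; (0 < a3)%R] ++ beta a1 ++ [:: false; false; false]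
  ++ beta `|a2|%N ++ [:: false; false; false] ++ beta `|a3|%N.

From Stdlib Require Import PArith NArith.
From HB Require Import structures.
From mathcomp Require Import all_boot all_order all_algebra.
From mathcomp Require Import all_classical all_reals all_analysis.
From mathcomp Require Import zify lra.
Set Implicit Arguments. Unset Strict Implicit. Unset Printing Implicit Defensive.
Import Order.TTheory GRing.Theory Num.Theory.
Local Open Scope classical_set_scope.
Local Open Scope ring_scope.

(* The advice is three integers and a constant number of separator bits, and the
   code of an integer n has about 2 log2 n bits, so it suffices to bound a1, |a2|
   and |a3| by a constant multiple of x = max(L, 1) / lam.  As lam <= 1,
   a1 = ceil(2 / lam) <= 3 / lam.  The chosen tile lies in the disc of radius lam
   around q and |q - p| <= L, so in each coordinate its corner is within L + lam
   of p; counted in tiles of side 1 / a1 this gives |a_i| <= (L + lam) a1 + 1,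
   which is at most 7x. *)

Lemma size_beta n : size (beta n) = (2 * size (binrep n))%N.
Proof.
rewrite /beta; elim: (binrep n) => [|b s IH] //=.
by rewrite size_cat IH; case: b; rewrite mulnS.
Qed.

Lemma size_Code a1 a2 a3 : size (Code a1 a2 a3) =
  (8 + 2 * (size (binrep a1) + size (binrep `|a2|) + size (binrep `|a3|)))%N.
Proof. by rewrite /Code !size_cat !size_beta /=; lia. Qed.

Lemma exp2_size_pos_bits x : (2 ^ size (pos_bits x) <= 2 * Pos.to_nat x)%N.
Proof.
elim: x => [y IH|y IH|] //=; rewrite size_rcons expnS leq_mul2l /=.
- by rewrite Pos2Nat.inj_xI; apply: leq_trans IH _; lia.
- by rewrite Pos2Nat.inj_xO.
Qed.

Lemma exp2_size_binrep n : (2 ^ size (binrep n) <= 2 * maxn n 1)%N.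
Proof.
rewrite /binrep; case E: (N.of_nat n) => [|x].
  by rewrite /= expn1 leq_pmulr // leq_max orbT.
have <- : Pos.to_nat x = n by rewrite -[RHS]Nat2N.id E.
by apply: leq_trans (exp2_size_pos_bits x) _; rewrite leq_pmul2l ?leq_maxl.
Qed.

Lemma size_binrep_le_ln (R : realType) n (x : R) : 1 <= x -> n%:R <= x ->
  (size (binrep n))%:R <= 1 + ln x / ln 2.
Proof.
move=> x_ge1 n_le_x.
have ln2_gt0 : 0 < ln (2 : R) by rewrite ln_gt0 // ltr1n.
have x_gt0 : 0 < x by apply: lt_le_trans x_ge1.
have pow_le : (2 : R) ^+ size (binrep n) <= 2 * x.
  apply: le_trans (_ : (2 * maxn n 1)%:R <= _).
    by rewrite -natrX ler_nat exp2_size_binrep.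
  by rewrite natrM ler_pM2l // /maxn; case: ltnP.
have := pow_le; rewrite -ler_ln ?posrE ?exprn_gt0 ?mulr_gt0 //.
rewrite lnXn // lnM ?posrE // => ln_le.
rewrite -(ler_pM2r ln2_gt0) mulrDl divfK ?gt_eqF //.
by rewrite mul1r mulrC mulr_natr.
Qed.

Lemma size_Code_le_ln (R : realType) (x : R) a1 (a2 a3 : int) : 1 <= x ->
  a1%:R <= x -> (`|a2|%N)%:R <= x -> (`|a3|%N)%:R <= x ->
  (size (Code a1 a2 a3))%:R <= 14 + 6 * (ln x / ln 2).
Proof.
move=> x_ge1 /(size_binrep_le_ln x_ge1) h1 /(size_binrep_le_ln x_ge1) h2.
move=> /(size_binrep_le_ln x_ge1) h3.
rewrite size_Code natrD natrM !natrD; lra.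
Qed.

Lemma size_Code_le_mul_ln (R : realType) (K x : R) a1 (a2 a3 : int) :
  1 <= K -> 1 <= x ->
  a1%:R <= K * x -> (`|a2|%N)%:R <= K * x -> (`|a3|%N)%:R <= K * x ->
  (size (Code a1 a2 a3))%:R <= (14 + 6 * ((ln K + 1) / ln 2)) * (1 + ln x).
Proof.
move=> K_ge1 x_ge1 a1_le a2_le a3_le.
have Kx_ge1 : 1 <= K * x by rewrite mulr_ege1.
apply: le_trans (size_Code_le_ln Kx_ge1 a1_le a2_le a3_le) _.
have w_ge0 : 0 <= (ln (2 : R))^-1 by rewrite invr_ge0 ltW // ln_gt0 // ltr1n.
have lnK_ge0 : 0 <= ln K by apply: ln_ge0.
have lnx_ge0 : 0 <= ln x by apply: ln_ge0.
rewrite lnM ?posrE; [|lra|lra].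
move: (ln K) (ln x) (ln 2)^-1 lnK_ge0 lnx_ge0 w_ge0 => a y w a_ge0 y_ge0 w_ge0.
by have := mulr_ge0 (mulr_ge0 a_ge0 w_ge0) y_ge0; lra.
Qed.

Lemma int_lbounded_has_min (P : int -> Prop) (b : int) :
  (exists j, P j) -> (forall j, P j -> b <= j) ->
  exists2 j, P j & forall k, P k -> j <= k.
Proof.
move=> [j Pj] P_ge_b.
have shiftK k : P k -> b + `|k - b|%N = k by move=> /P_ge_b; lia.
have exP : exists n : nat, `[< P (b + n%:Z) >].
  by exists `|j - b|%N; rewrite shiftK //; apply/asboolP.
case: (ex_minnP exP) => m /asboolP Pm m_min; exists (b + m%:Z) => // k Pk.
have := m_min `|k - b|%N; rewrite shiftK // => /(_ (asboolT Pk)).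
by have := shiftK _ Pk; lia.
Qed.

Section Plane.
Variable R : realType.
Implicit Types (p q z : pt R) (lam : R).

Lemma dist_ge_norm1 (a b : pt R) : `|a.1 - b.1| <= dist a b.
Proof. by rewrite /dist -sqrtr_sqr ler_wsqrtr // lerDl sqr_ge0. Qed.

Lemma dist_ge_norm2 (a b : pt R) : `|a.2 - b.2| <= dist a b.
Proof. by rewrite /dist -sqrtr_sqr ler_wsqrtr // lerDr sqr_ge0. Qed.

Lemma dist_le (a b : pt R) (r : R) : 0 <= r ->
  (a.1 - b.1) ^+ 2 + (a.2 - b.2) ^+ 2 <= r ^+ 2 -> dist a b <= r.
Proof. by move=> r_ge0 h; rewrite /dist -(ger0_norm r_ge0) -sqrtr_sqr ler_wsqrtr. Qed.

Lemma conv_hull_fst_le (vs : seq (pt R)) z : conv_hull vs z ->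
  z.1 <= \sum_(i < size vs) `|(nth (0, 0) vs i).1|.
Proof.
move=> [w [w_size w_ge0 w_sum1 ->]] /=.
set M := \sum_(i < _) `|_|.
rewrite -[M]mul1r -w_sum1 mulr_suml; apply: ler_sum => i _; apply: ler_wpM2l.
  by move/allP: w_ge0; apply; rewrite mem_nth // w_size.
apply: le_trans (ler_norm _) _.
by rewrite /M (bigD1 i) //= lerDl sumr_ge0.
Qed.

Lemma shortest_path_length_ge_dist (T : set (pt R)) p q L :
  shortest_path_length T p q L -> dist q p <= L.
Proof.
move=> [[g [[g0 g1 _ _] gL]] _]; rewrite -lee_fin -gL.
apply: ereal_sup_ubound; exists 1%N, (fun i => if i is 0%N then 0 else 1).
by split=> //; [case | rewrite big_ord1 g0 g1].
Qed.

Lemma accessibility_le1 (T : set (pt R)) q : accessibility T q <= 1.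
Proof. by rewrite ge_min lexx. Qed.

Lemma accessibility_gt0 (v0 : seq (pt R)) (T : set (pt R)) q :
  T `<=` conv_hull v0 -> interior_of T q -> 0 < accessibility T q.
Proof.
move=> T_sub [r [r_gt0 disc_sub]].
set S := [set r : R | 0 <= r /\ cdisc q r `<=` T].
have S_half_r : S (r / 2).
  split=> [|y]; first lra.
  by rewrite /cdisc /= => qy; apply: disc_sub; rewrite /odisc /=; lra.
set M := \sum_(i < size v0) `|(nth (0, 0) v0 i).1|.
have S_ub : ubound S (M - q.1).
  move=> s [s_ge0 s_sub]; suff : q.1 + s <= M by lra.
  apply: (conv_hull_fst_le (z := (q.1 + s, q.2))); apply/T_sub/s_sub.
  apply: dist_le => //=.
  by rewrite subrr expr0n /= addr0 opprD addrA subrr sub0r sqrrN.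
have := sup_upper_bound (conj (ex_intro _ _ S_half_r) (ex_intro _ _ S_ub)) S_half_r.
by rewrite /accessibility -/S lt_min ltr01 /=; lra.
Qed.

Lemma adv_a1_bounds lam : 0 < lam ->
  2 / lam <= (adv_a1 lam)%:R < 2 / lam + 1.
Proof.
move=> lam_gt0; have ceil_ge0 : 0 <= Num.ceil (2 / lam).
  by rewrite -(ler_int R) (le_trans _ (ceil_ge _)) // divr_ge0 // ltW.
have := ceilB1_lt (2 / lam).
by rewrite /adv_a1 natr_absz ger0_norm // intrB ceil_ge /= => ?; lra.
Qed.

Lemma adv_a1_gt0 lam : 0 < lam -> (0 < adv_a1 lam)%N.
Proof.
move=> lam_gt0; have /andP [a1_ge _] := adv_a1_bounds lam_gt0.
by rewrite -(ltr0n R) (lt_le_trans _ a1_ge) // divr_gt0.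
Qed.

Lemma adv_a1_side_le lam : 0 < lam -> 1 / (adv_a1 lam)%:R <= lam / 2.
Proof.
move=> lam_gt0; have /andP [a1_ge _] := adv_a1_bounds lam_gt0.
rewrite ler_pdivrMr ?ltr0n ?adv_a1_gt0 // mulrC -ler_pdivrMr ?divr_gt0 //.
by rewrite invf_div mul1r.
Qed.

Lemma adv_a1_le lam : 0 < lam -> lam <= 1 -> (adv_a1 lam)%:R <= 3 / lam.
Proof.
move=> lam_gt0 lam_le1; have /andP [_ a1_lt] := adv_a1_bounds lam_gt0.
have : 1 <= lam^-1 by rewrite invr_ge1 ?unitfE ?gt_eqF.
by lra.
Qed.

Lemma tile_lo_bounds (x0 : R) a1 (i : int) : (0 < a1)%N ->
  i%:~R - 1 <= (tile_lo x0 a1 i - x0) * a1%:R <= i%:~R.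
Proof.
move=> a1_gt0; rewrite /tile_lo addrAC subrr add0r divfK ?pnatr_eq0 -?lt0n //.
by case: ifP => _; rewrite ?intrB lexx lerBlDr lerDl ler01.
Qed.

Lemma exists_tile_coord (x0 y : R) a1 : (0 < a1)%N ->
  exists2 i : int, i != 0 & tile_lo x0 a1 i <= y <= tile_lo x0 a1 i + 1 / a1%:R.
Proof.
move=> a1_gt0; have a1_gt0R : 0 < (a1%:R : R) by rewrite ltr0n.
set t := (y - x0) * a1%:R; set k := Num.floor t.
have /andP [k_le_t t_lt_k1] : k%:~R <= t < k%:~R + 1.
  by rewrite floor_le -intrD1 floorD1_gt.
(* Columns are numbered without 0: the one starting at [x0 + k / a1] is [k + 1]
   for [k >= 0] and [k] for [k < 0]. *)
exists (if 0 <= k then k + 1 else k); first by case: ifP; lia.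
have -> : tile_lo x0 a1 (if 0 <= k then k + 1 else k) = x0 + k%:~R / a1%:R.
  rewrite /tile_lo; have [k_ge0|k_lt0] := leP 0 k.
    by rewrite ifT ?addrK //; lia.
  by rewrite ifF //; lia.
have -> : y = x0 + t / a1%:R by rewrite mulfK ?subrKC // gt_eqF.
by rewrite -addrA -mulrDl !lerD2l !ler_pM2r ?invr_gt0 // k_le_t ltW.
Qed.

Lemma tile_corner_near p q lam a1 (i j : int) : tile p a1 i j `<=` cdisc q lam ->
  `|q.1 - tile_lo p.1 a1 i| <= lam /\ `|q.2 - tile_lo p.2 a1 j| <= lam.
Proof.
set c := (tile_lo p.1 a1 i, tile_lo p.2 a1 j) => /(_ c) qc.
have /qc qc_le : tile p a1 i j c by rewrite /tile /= !lexx !lerDl divr_ge0.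
by split; apply: le_trans qc_le;
  [apply: (dist_ge_norm1 q c) | apply: (dist_ge_norm2 q c)].
Qed.

Lemma tile_index_ge (x0 y : R) lam a1 (i : int) : (0 < a1)%N ->
  `|y - tile_lo x0 a1 i| <= lam -> Num.floor ((y - lam - x0) * a1%:R) <= i.
Proof.
move=> a1_gt0; rewrite ler_norml => /andP [_ y_le].
rewrite -(ler_int R); apply: le_trans (floor_le _) _.
have /andP [_ lo_le_i] := tile_lo_bounds x0 i a1_gt0.
by apply: le_trans lo_le_i; rewrite ler_wpM2r //; lra.
Qed.

Lemma norm_tile_index_le (x0 y : R) lam a1 (i : int) : (0 < a1)%N ->
  `|y - tile_lo x0 a1 i| <= lam -> (`|i|%N)%:R <= (`|y - x0| + lam) * a1%:R + 1.
Proof.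
move=> a1_gt0 y_near; have /andP [lo_ge lo_le] := tile_lo_bounds x0 i a1_gt0.
have lo_near : `|tile_lo x0 a1 i - x0| <= `|y - x0| + lam.
  by rewrite (le_trans (ler_distD y _ _)) // distrC addrC lerD2l.
have scaled_near :
    `|(tile_lo x0 a1 i - x0) * a1%:R| <= (`|y - x0| + lam) * a1%:R.
  by rewrite normrM normr_nat; apply: ler_wpM2r.
move: lo_ge lo_le scaled_near; rewrite natr_absz intr_norm.
move: ((tile_lo x0 a1 i - x0) * a1%:R) ((`|y - x0| + lam) * a1%:R) => s B.
by rewrite !ler_norml => ? ? /andP [? ?]; apply/andP; split; lra.
Qed.

Lemma advice_index_le (x0 y : R) lam L a1 (i : int) :
  0 < lam -> lam <= 1 -> (0 < a1)%N -> a1%:R <= 3 / lam ->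
  `|y - x0| <= L -> `|y - tile_lo x0 a1 i| <= lam ->
  (`|i|%N)%:R <= 7 * (Num.max L 1 / lam).
Proof.
move=> lam_gt0 lam_le1 a1_gt0 a1_le y_le /(norm_tile_index_le a1_gt0) /le_trans.
apply; set M := Num.max L 1.
have L_le_M : L <= M by rewrite le_max lexx.
have M_ge1 : 1 <= M by rewrite le_max lexx orbT.
have x_ge1 : 1 <= M / lam by rewrite ler_pdivlMr // mul1r; lra.
have : (`|y - x0| + lam) * a1%:R <= (2 * M) * (3 / lam).
  by apply: ler_pM; rewrite ?addr_ge0 ?ler0n //; lra.
by rewrite mulrACA -mulrA; lra.
Qed.

Lemma exists_tile_sub_cdisc p q lam a1 : 0 < lam -> (0 < a1)%N ->
  1 / a1%:R <= lam / 2 ->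
  exists i j : int, [/\ i != 0, j != 0 & tile p a1 i j `<=` cdisc q lam].
Proof.
move=> lam_gt0 a1_gt0 side_le.
have sqr_le (e : R) : `|e| <= lam / 2 -> e ^+ 2 <= (lam / 2) ^+ 2.
  move=> e_le; rewrite -real_normK ?num_real //.
  by apply: lerXn2r; rewrite ?nnegrE ?normr_ge0 //; lra.
have [i i_neq0 /andP [qi_ge qi_le]] := exists_tile_coord p.1 q.1 a1_gt0.
have [j j_neq0 /andP [qj_ge qj_le]] := exists_tile_coord p.2 q.2 a1_gt0.
exists i, j; split=> // z [/andP [zi_ge zi_le] /andP [zj_ge zj_le]].
apply: dist_le; first exact: ltW.
have near1 : `|q.1 - z.1| <= lam / 2 by rewrite ler_norml; apply/andP; split; lra.
have near2 : `|q.2 - z.2| <= lam / 2 by rewrite ler_norml; apply/andP; split; lra.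
by apply: le_trans (lerD (sqr_le _ near1) (sqr_le _ near2)) _; nra.
Qed.

Lemma advice_tile_exists p q lam a1 : 0 < lam -> (0 < a1)%N ->
  1 / a1%:R <= lam / 2 -> exists a2 a3, advice_tile p q lam a1 a2 a3.
Proof.
move=> lam_gt0 a1_gt0 side_le.
have [i0 [j0 [i0_neq0 j0_neq0 T0]]] :=
  exists_tile_sub_cdisc p q lam_gt0 a1_gt0 side_le.
pose row_ok j := j != 0 /\ exists2 i, i != 0 & tile p a1 i j `<=` cdisc q lam.
have [a3 [a3_neq0 [i1 i1_neq0 T1]] a3_min] :
    exists2 j, row_ok j & forall k, row_ok k -> j <= k.
  apply: (@int_lbounded_has_min _ (Num.floor ((q.2 - lam - p.2) * a1%:R))).
    by exists j0; split=> //; exists i0.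
  by move=> j [_ [i _ /tile_corner_near [_ ?]]]; apply: tile_index_ge.
pose col_ok i := i != 0 /\ tile p a1 i a3 `<=` cdisc q lam.
have [a2 [a2_neq0 T2] a2_min] : exists2 i, col_ok i & forall k, col_ok k -> i <= k.
  apply: (@int_lbounded_has_min _ (Num.floor ((q.1 - lam - p.1) * a1%:R))).
    by exists i1.
  by move=> i [_ /tile_corner_near [? _]]; apply: tile_index_ge.
exists a2, a3; split=> // i j i_neq0 j_neq0 Tij.
have := a3_min j (conj j_neq0 (ex_intro2 _ _ i i_neq0 Tij)).
rewrite le_eqVlt => /orP [/eqP a3j|]; last by left.
by right; split=> //; apply: a2_min; split=> //; rewrite a3j.
Qed.

End Plane.

Theorem lemma2p1 (R : realType) (c : R) : 1 < c ->
  exists C : R, forall (v0 : seq (pt R)) (obs : seq (seq (pt R))) (p q : pt R) (L : R),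
    regular_terrain c v0 obs ->
    terrain v0 obs p ->
    interior_of (terrain v0 obs) q ->
    shortest_path_length (terrain v0 obs) p q L ->
    let lam := accessibility (terrain v0 obs) q in
    let a1 := adv_a1 lam in
    (exists a2 a3, advice_tile p q lam a1 a2 a3) /\
    (forall a2 a3, advice_tile p q lam a1 a2 a3 ->
       (size (Code a1 a2 a3))%:R <= C * (1 + ln (Num.max L 1 / lam))).
Proof.
move=> _; exists (14 + 6 * ((ln 7 + 1) / ln 2)).
move=> v0 obs p q L _ _ q_int pq_L lam a1.
have lam_gt0 : 0 < lam by apply: (accessibility_gt0 (v0 := v0)) q_int => z [].
have lam_le1 : lam <= 1 := accessibility_le1 _ _.
have a1_gt0 : (0 < a1)%N := adv_a1_gt0 lam_gt0.
have a1_le : a1%:R <= 3 / lam := adv_a1_le lam_gt0 lam_le1.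
split; first by apply: advice_tile_exists; rewrite ?adv_a1_side_le.
move=> a2 a3 [_ _ /tile_corner_near [near1 near2] _].
have pq_le_L := shortest_path_length_ge_dist pq_L.
have M_ge1 : 1 <= Num.max L 1 by rewrite le_max lexx orbT.
apply: size_Code_le_mul_ln; rewrite ?ler1n //.
- by rewrite ler_pdivlMr // mul1r; lra.
- by apply: le_trans a1_le _; rewrite mulrA ler_pM2r ?invr_gt0 //; lra.
- by apply: advice_index_le near1 => //; apply: le_trans (dist_ge_norm1 q p) pq_le_L.
- by apply: advice_index_le near2 => //; apply: le_trans (dist_ge_norm2 q p) pq_le_L.
Qed.
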